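(* In the SBORS setting described in the context, for any round $t\le T$, any item $i\in\{1,\dots,N\}$ and any $r>1$, $$P\big(|u_i'(t)-\hat u_i(t)|>4\hat\sigma_{u_i}(t)\sqrt{\log (rR)}\big)\le\frac{1}{r^8R^7},\qquad P\big(|q'(t)-\hat q(t)|>4\hat\sigma_q(t)\sqrt{\log (rR)}\big)\le\frac{1}{r^8R^7}.$$
   Context: SBORS, with parameters $\alpha>0,\beta\ge2$ and integer $R\ge1$, maintains for each item $i$ of $N$ items a count $T_i(t)$ of views and estimate $\hat u_i(t)\in[0,1]$, and a count $N_q(t)$ and estimate $\hat q(t)\in[0,1]$, and sets $\hat\sigma_{u_i}(t)=\sqrt{\alpha\hat u_i(t)(1-\hat u_i(t))/(T_i(t)+1)}+\sqrt{\beta/T_i(t)}$, $\hat\sigma_q(t)=\sqrt{\alpha\hat q(t)(1-\hat q(t))/(N_q(t)+1)}+\sqrt{\beta/N_q(t)}$. In round $t$ it draws $\theta^{(1)},\dots,\theta^{(R)}$ i.i.d. $N(0,1)$, independently of the past, and sets $u_i'(t)=\max_{j\le R}\big(\hat u_i(t)+\theta^{(j)}\hat\sigma_{u_i}(t)\big)$ and $q'(t)=\max_{j\le R}\big(\hat q(t)+\theta^{(j)}\hat\sigma_q(t)\big)$. *)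

From HB Require Import structures.
From mathcomp Require Import all_boot all_order all_algebra.
From mathcomp Require Import all_classical all_reals all_analysis.
Set Implicit Arguments. Unset Strict Implicit. Unset Printing Implicit Defensive.
Import Order.TTheory GRing.Theory Num.Theory.
Import numFieldNormedType.Exports.
Local Open Scope classical_set_scope.
Local Open Scope ring_scope.

(* Standard deviation proxy of SBORS:
   sqrt(alpha x (1-x)/(n+1)) + sqrt(beta/n)   (x = estimate, n = count).
   Note: for n = 0, beta/0 = 0 by the MathComp convention. *)
Definition sbors_sigma {R : realType} (alpha beta x : R) (n : nat) : R :=
  Num.sqrt (alpha * x * (1 - x) / (n.+1)%:R) + Num.sqrt (beta / n%:R).

(* maximum of a nonempty finite family of reals (for n = 0 it returns 0) *)
Definition maxI {R : realType} (n : nat) (f : 'I_n -> R) : R :=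
  let s := [seq f j | j <- enum 'I_n] in foldr Num.max (head 0 s) s.

Definition sbors_perturb {R : realType} (Rn : nat) (x sig : R)
  (theta : 'I_Rn -> R) : R := maxI (fun j => x + theta j * sig).

(* Mutual independence of a finite family of real random variables:
   product rule for every family of Borel sets (taking B j = setT recovers
   every subfamily). *)
Definition mutually_independent d (T : measurableType d) {R : realType}
  (P : probability T R) (n : nat) (X : 'I_n -> {RV P >-> R}) : Prop :=
  forall B : 'I_n -> set R, (forall j, measurable (B j)) ->
    P [set w | forall j, B j (X j w)] = (\prod_(j < n) P (X j @^-1` B j))%E.

Definition std_normal d (T : measurableType d) {R : realType}
  (P : probability T R) (X : {RV P >-> R}) : Prop :=
  forall A : set R, measurable A -> distribution P X A = normal_prob 0 1 A.

From HB Require Import structures.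
From mathcomp Require Import all_boot all_order all_algebra.
From mathcomp Require Import all_classical all_reals all_analysis.
From mathcomp Require Import measurable_realfun ring lra.
Import Order.TTheory GRing.Theory Num.Theory.
Import numFieldNormedType.Exports.
Local Open Scope classical_set_scope.
Local Open Scope ring_scope.

(* The perturbed value exceeds the estimate by theta^(j) * sigma for the
   maximising draw j, so a deviation larger than 4 sigma sqrt(log(rR)) forces
   |theta^(j)| > a := 4 sqrt(log(rR)) for some j.  For a standard normal Z,
   P(Z >= a) <= exp(-a^2/2) P(Z >= 0) by comparing the density on [a, oo)
   with its translate by a, hence P(|Z| > a) <= exp(-a^2/2) by symmetry.
   A union bound over the R draws gives R exp(-8 log(rR)) = 1/(r^8 R^7). *)

Lemma normal_prob_set1 {R : realType} (m s x : R) :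
  normal_prob m s [set x] = 0%E.
Proof.
have /null_content_dominatesP := normal_prob_dominates m s.
by apply; [exact: measurable_set1 | exact: lebesgue_measure_set1].
Qed.

Lemma ge0_integral_itvcy_translate {R : realType} (G : R -> R) (a : R) :
  continuous G -> (forall x, 0 <= G x) ->
  (\int[lebesgue_measure]_(x in `[0%R, +oo[) (G x)%:E =
   \int[lebesgue_measure]_(x in `[a, +oo[) (G (x - a))%:E)%E.
Proof.
move=> cG G0.
have dshift : (fun x : R => x - a)^`()%classic = cst 1.
  by apply/funext => x; rewrite derive1E deriveB // derive_id derive_cst subr0.
have := @increasing_ge0_integration_by_substitutiony R (fun x => x - a) G a.
rewrite subrr dshift => ->.
- by apply: eq_integral => x _; rewrite /= mulr1.
- by move=> x y _ _; rewrite ltrBlDr subrK.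
- by move=> x _; exact: cst_continuous.
- exact: is_cvg_cst.
- exact: is_cvg_cst.
- split; first by move=> x _; exact: derivableB.
  by apply: cvg_at_right_filter; apply: continuousB => //; exact: cvg_cst.
- exact: cvg_addrr.
- exact: continuous_subspaceT.
- by move=> x _; exact: G0.
Qed.

Lemma content_bigcup_ord_le {d} {T : semiRingOfSetsType d} {R : realFieldType}
  (mu : {content set T -> \bar R}) {n : nat} (F : 'I_n -> set T) (X : set T) :
  (forall j, measurable (F j)) -> measurable X -> X `<=` \bigcup_j F j ->
  (mu X <= \sum_(j < n) mu (F j))%E.
Proof.
move=> mF mX XF; pose A k := if insub k is Some j then F j else set0.
have AF (j : 'I_n) : A j = F j by rewrite /A valK.
under eq_bigr do rewrite -AF.
apply: content_subadditive => //.
  by move=> k _; rewrite /A; case: insub.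
move=> x /XF [j _ Fjx]; rewrite -bigcup_mkord.
by exists j; [exact: ltn_ord | rewrite /= AF].
Qed.

Lemma set_abs_gtE {R : realType} (a : R) :
  [set x : R | a < `|x|] = `]-oo, (- a)%R[ `|` `]a, +oo[.
Proof.
apply/seteqP; split => x /=; rewrite !in_itv /= andbT ltr_normr.
  by case/orP => ?; [right | left; rewrite ltrNr].
by case => ?; apply/orP; [right; rewrite ltrNr | left].
Qed.

Lemma measurable_abs_gt {R : realType} (a : R) :
  measurable [set x : R | a < `|x|].
Proof. by rewrite set_abs_gtE; exact: measurableU. Qed.

Section standard_normal_tail.
Variable R : realType.
Local Notation phi := (@normal_pdf R 0 1).
Local Notation gauss := (@normal_prob R 0 1).

Lemma normal_pdf01E x : phi x = normal_peak 1 * expR (- x ^+ 2 / 2).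
Proof. by rewrite /normal_pdf oner_eq0 /normal_fun subr0 expr1n. Qed.

Lemma normal_pdf01N x : phi (- x) = phi x.
Proof. by rewrite !normal_pdf01E sqrrN. Qed.

Lemma continuous_normal_pdf01 : continuous phi.
Proof. exact/continuous_normal_pdf/oner_neq0. Qed.

Lemma normal_prob01_itvNyc t : gauss `]-oo, - t] = gauss `[t, +oo[.
Proof.
rewrite /normal_prob ge0_integration_by_substitutionNy.
- by apply: eq_integral => x _ /=; rewrite normal_pdf01N.
- exact: continuous_subspaceT continuous_normal_pdf01.
- by move=> x _; exact: normal_pdf_ge0.
Qed.

Lemma normal_prob01_itv0y : (gauss `[0%R, +oo[ *+ 2 = 1)%E.
Proof.
have gaussNy0 : gauss `]-oo, 0[ = gauss `[0%R, +oo[.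
  rewrite -(normal_prob01_itvNyc 0) oppr0 -(@setUitv1 _ _ _ _ true) //.
  rewrite measureU //=.
    by rewrite normal_prob_set1 adde0.
  by apply/seteqP; split => x //= [+ x0]; rewrite x0 /= in_itv /= ltxx.
transitivity (gauss setT); last exact: probability_setT.
have -> : [set: R] = `]-oo, 0[ `|` `[0%R, +oo[ by rewrite -setCitvl setUv.
rewrite measureU //=.
  by rewrite gaussNy0 -mulr2n.
by rewrite -setCitvl setICr.
Qed.

Lemma normal_prob01_itvcy_le (a : R) : 0 <= a ->
  (gauss `[a, +oo[ <= (expR (- a ^+ 2 / 2))%:E * gauss `[0%R, +oo[)%E.
Proof.
move=> a0.
have mphi_a : measurable_fun setT (fun x : R => phi (x - a)).
  apply: continuous_measurable_fun => x.
  apply: (@continuous_comp _ _ _ (fun x : R => x - a) phi).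
    by apply: continuousB => //; exact: cvg_cst.
  exact: continuous_normal_pdf01.
rewrite /normal_prob (ge0_integral_itvcy_translate _ a continuous_normal_pdf01);
  last by move=> x; exact: normal_pdf_ge0.
rewrite -ge0_integralZl //=; last 2 first.
- exact/measurable_EFinP/measurable_funTS.
- by move=> x _; rewrite lee_fin normal_pdf_ge0.
apply: ge0_le_integral => //=.
- by move=> x _; rewrite lee_fin normal_pdf_ge0.
- by apply/measurable_EFinP/measurable_funTS; exact: measurable_normal_pdf.
- by apply: measurable_funeM; exact/measurable_EFinP/measurable_funTS.
- move=> x; rewrite /= in_itv /= andbT => ax.
  rewrite -EFinM lee_fin !normal_pdf01E mulrCA ler_pM2l ?normal_peak_gt0 //.
  (* (x - a)^2 + a^2 <= x^2 as 0 <= a <= x *)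
  rewrite -expRD ler_expR; nra.
Qed.

Lemma normal_prob01_abs_gt (a : R) : 0 <= a ->
  (gauss [set x | (a < `|x|)%R] <= (expR (- a ^+ 2 / 2))%:E)%E.
Proof.
move=> a0.
have abs_gt_sub : [set x | a < `|x|] `<=` `]-oo, (- a)%R] `|` `[a, +oo[.
  rewrite set_abs_gtE => x [] /=; rewrite !in_itv /= ?andbT => /ltW.
  - by left.
  - by right.
apply: (le_trans (le_measure gauss _ _ abs_gt_sub)).
- by rewrite inE; exact: measurable_abs_gt.
- by rewrite inE; exact: measurableU.
apply: (le_trans (measureU2 _ _ _)) => //.
rewrite /= normal_prob01_itvNyc -[leRHS]mule1 -normal_prob01_itv0y mulr2n.
by rewrite ge0_muleDr //; apply: leeD; exact: normal_prob01_itvcy_le.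
Qed.

End standard_normal_tail.

Lemma foldr_max_mem {R : numDomainType} (y : R) (s : seq R) :
  foldr Num.max y s \in y :: s.
Proof.
elim: s => [|z s IH] /=; first by rewrite mem_seq1.
rewrite /Num.max; case: ifP => _; last by rewrite !inE eqxx orbT.
by move: IH; rewrite !inE => /orP[->|->]; rewrite ?orbT.
Qed.

Lemma maxI_attained {R : realType} {n : nat} (f : 'I_n -> R) : (0 < n)%N ->
  exists j, maxI f = f j.
Proof.
move=> n_gt0; pose s := [seq f j | j <- enum 'I_n].
have head_s : head 0 s \in s.
  by apply: (@mem_nth _ 0 s 0); rewrite size_map size_enum_ord.
have : maxI f \in s.
  rewrite /maxI -/s.
  by have := foldr_max_mem (head 0 s) s; rewrite inE => /orP[/eqP ->|].
by case/mapP => j _ ->; exists j.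
Qed.

Lemma measurable_foldr_max {d} {T : measurableType d} {R : realType}
  (I : Type) (g : I -> T -> R) (h : T -> R) (e : seq I) :
  (forall j, measurable_fun setT (g j)) -> measurable_fun setT h ->
  measurable_fun setT (fun w => foldr Num.max (h w) [seq g j w | j <- e]).
Proof.
move=> mg mh; elim: e => [|j e IH] //=.
exact: measurable_maxr.
Qed.

Lemma measurable_maxI {d} {T : measurableType d} {R : realType} {n : nat}
  (g : 'I_n -> T -> R) :
  (forall j, measurable_fun setT (g j)) ->
  measurable_fun setT (fun w => maxI (fun j => g j w)).
Proof.
move=> mg; rewrite /maxI /=.
case: (enum 'I_n) => [|j e] /=; first exact: measurable_cst.
exact: (@measurable_foldr_max _ _ _ _ g (g j) (j :: e) mg (mg j)).
Qed.

Section sbors_deviation.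
Context {d} {T : measurableType d} {R : realType} (P : probability T R).

Lemma std_normal_abs_gt (X : {RV P >-> R}) (a : R) : std_normal X -> 0 <= a ->
  (P [set w | (a < `|X w|)%R] <= (expR (- a ^+ 2 / 2))%:E)%E.
Proof.
move=> normX a0; have := normX _ (measurable_abs_gt a).
rewrite /distribution /pushforward /= => ->.
exact: normal_prob01_abs_gt.
Qed.

Lemma measurable_sbors_perturb {n : nat} (X : 'I_n -> T -> R) (x s : R) :
  (forall j, measurable_fun setT (X j)) ->
  measurable_fun setT (fun w => sbors_perturb x s (fun j => X j w)).
Proof.
move=> mX; rewrite /sbors_perturb.
apply: (measurable_maxI (fun j w => x + X j w * s)) => j.
by apply: measurable_funD => //; exact: measurable_funM.
Qed.

Lemma sbors_perturb_deviation {n : nat} (th : 'I_n -> {RV P >-> R})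
  (x s a : R) :
  (0 < n)%N -> (forall j, std_normal (th j)) -> 0 <= s -> 0 <= a ->
  (P [set w | (a * s < `|sbors_perturb x s (fun j => th j w) - x|)%R]
     <= (n%:R * expR (- a ^+ 2 / 2))%:E)%E.
Proof.
move=> n_gt0 normth s0 a0; set E := [set w | _].
have mE : measurable E.
  have mdev : measurable_fun setT
      (fun w => `|sbors_perturb x s (fun j => th j w) - x|).
    apply: measurableT_comp => //; apply: measurable_funB => //.
    exact: measurable_sbors_perturb.
  have := mdev measurableT _ (measurable_itv `]a * s, +oo[).
  by rewrite setTI; congr measurable; apply/seteqP; split => w /=;
    rewrite in_itv /= andbT.
have E_sub : E `<=` \bigcup_j (th j @^-1` [set y | a < `|y|]).
  move=> w; rewrite /E /sbors_perturb /=.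
  have [j ->] := maxI_attained (fun j => x + th j w * s) n_gt0.
  rewrite addrC addKr normrM (ger0_norm s0) => dev_gt.
  have s_gt0 : 0 < s.
    rewrite lt_def s0 andbT; apply: contraTneq dev_gt => ->.
    by rewrite !mulr0 ltxx.
  by exists j => //=; rewrite -(ltr_pM2r s_gt0).
apply: (le_trans (content_bigcup_ord_le P _ _ _ mE E_sub)).
  by move=> j; exact: measurable_funPTI (measurable_abs_gt a).
apply: le_trans; first by apply: lee_sum => j _; exact: std_normal_abs_gt.
by rewrite sumEFin sumr_const card_ord mulr_natl.
Qed.

End sbors_deviation.

Lemma expR_Nhalf_sqr_4sqrt_ln {R : realType} (y : R) : 1 <= y ->
  expR (- (4 * Num.sqrt (ln y)) ^+ 2 / 2) = (y ^+ 8)^-1.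
Proof.
move=> y_ge1; have y_gt0 : 0 < y by rewrite (lt_le_trans ltr01).
rewrite exprMn sqr_sqrtr ?ln_ge0 //.
have -> : - (4 ^+ 2 * ln y) / 2 = - ln (y ^+ 8) by rewrite lnXn //; field.
by rewrite expRN lnK // posrE exprn_gt0.
Qed.

Theorem lemma3 (R : realType) (d : measure_display) (Omega : measurableType d)
  (P : probability Omega R)
  (alpha beta : R) (Rn N Tmax : nat)
  (uhat : nat -> 'I_N -> R) (Tc : nat -> 'I_N -> nat)
  (qhat : nat -> R) (Nq : nat -> nat)
  (theta : nat -> 'I_Rn -> {RV P >-> R}) :
  0 < alpha -> 2 <= beta -> (1 <= Rn)%N ->
  (forall t i, 0 <= uhat t i <= 1) -> (forall t, 0 <= qhat t <= 1) ->
  (forall t j, std_normal (theta t j)) ->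
  (forall t, mutually_independent (theta t)) ->
  forall (t : nat) (i : 'I_N) (r : R), (t <= Tmax)%N -> 1 < r ->
  let su := sbors_sigma alpha beta (uhat t i) (Tc t i) in
  let sq := sbors_sigma alpha beta (qhat t) (Nq t) in
  (P [set w | (4 * su * Num.sqrt (ln (r * Rn%:R)) <
        `|sbors_perturb (uhat t i) su (fun j => theta t j w) - uhat t i|)%R ]
     <= ((r ^+ 8 * Rn%:R ^+ 7)^-1)%:E)%E /\
  (P [set w | (4 * sq * Num.sqrt (ln (r * Rn%:R)) <
        `|sbors_perturb (qhat t) sq (fun j => theta t j w) - qhat t|)%R ]
     <= ((r ^+ 8 * Rn%:R ^+ 7)^-1)%:E)%E.
Proof.
move=> _ _ Rn_gt0 _ _ normth _ t i r _ r_gt1 su sq.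
have Rn_ge1 : 1 <= Rn%:R :> R by rewrite ler1n.
have rRn_ge1 : 1 <= r * Rn%:R by rewrite mulr_ege1 // ltW.
have deviation (x s : R) : 0 <= s ->
    (P [set w | (4 * s * Num.sqrt (ln (r * Rn%:R)) <
        `|sbors_perturb x s (fun j => theta t j w) - x|)%R ]
     <= ((r ^+ 8 * Rn%:R ^+ 7)^-1)%:E)%E.
  move=> s_ge0; under eq_set do rewrite mulrAC.
  apply: (le_trans (sbors_perturb_deviation P (theta t) x s _
    Rn_gt0 (normth t) s_ge0 _)).
    by rewrite mulr_ge0 ?sqrtr_ge0.
  rewrite expR_Nhalf_sqr_4sqrt_ln // lee_fin exprMn.
  by rewrite [leLHS](_ : _ = (r ^+ 8 * Rn%:R ^+ 7)^-1) //; field; lra.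
have sigma_ge0 x n : 0 <= sbors_sigma alpha beta x n.
  by rewrite addr_ge0 ?sqrtr_ge0.
by split; apply: deviation; exact: sigma_ge0.
Qed.
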